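(* Let $n\in\mathbb{N}$ and $c=(c_0,\dots,c_n)\in\mathbb{C}^{n+1}$ with $c_n=1$. Then for every $\omega\in\mathscr{C}^n(\mathbb{R})$ with $D_c(\omega)=0$ and for all $u,v\in\mathbb{R}$, \[ \omega(u+v)=\sum_{j=0}^{n-1}\sum_{i=0}^{n-1-j}c_{i+j+1}\,\omega_c^{(i)}(u)\,\omega^{(j)}(v). \]
   Context: For an open interval $J\subseteq\mathbb{R}$, $\mathscr{C}^n(J)$ denotes the space of $n$ times continuously differentiable complex-valued functions on $J$. For $c=(c_0,\dots,c_n)\in\mathbb{C}^{n+1}$ with $c_n=1$, the differential operator $D_c$ is defined by $D_c(f):=c_nf^{(n)}+\dots+c_1f'+c_0f$ for $f\in\mathscr{C}^n(J)$. The characteristic solution $\omega_c\colon\mathbb{R}\to\mathbb{C}$ is the unique solution of the initial value problem $D_c(\omega_c)=0$, $\omega_c^{(k)}(0)=\delta_{k,n-1}$ for $k\in\{0,\dots,n-1\}$ ($\delta$ is the Kronecker delta). *)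

From Stdlib Require Import Reals.
From Coquelicot Require Import Coquelicot.
Open Scope C_scope.

Fixpoint csum (N : nat) (f : nat -> C) : C :=
  match N with
  | O => 0
  | S k => csum k f + f k
  end.

Definition CDerive (f : R -> C) : R -> C :=
  fun x => (Derive (fun t => fst (f t)) x, Derive (fun t => snd (f t)) x).

Fixpoint CDerive_n (k : nat) (f : R -> C) : R -> C :=
  match k with
  | O => f
  | S k' => CDerive (CDerive_n k' f)
  end.

Definition Cn (n : nat) (f : R -> C) : Prop :=
  (forall k x, (k < n)%nat -> ex_derive (CDerive_n k f) x) /\
  (forall k x, (k <= n)%nat -> continuous (CDerive_n k f) x).

Definition Dc (n : nat) (c : nat -> C) (f : R -> C) : R -> C :=
  fun x => csum (S n) (fun k => c k * CDerive_n k f x).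

(* w is the characteristic solution omega_c: the solution in C^n(R) of
   D_c(w) = 0 with w^(k)(0) = delta_{k,n-1} for k in {0,...,n-1} *)
Definition is_char_solution (n : nat) (c : nat -> C) (w : R -> C) : Prop :=
  Cn n w /\ (forall x, Dc n c w x = 0) /\
  (forall k, (k < n)%nat ->
     CDerive_n k w 0%R = (if Nat.eqb k (n - 1) then 1 else 0)).

(* Fix s = u + v and consider
     F t = sum_{j<n} G_j(t) w^(j)(s - t),   G_j = sum_{i<n-j} c_{i+j+1} wc^(i).
   Since G_j = c_{j+1} wc + G_{j+1}', the derivative of F telescopes to
   G_0'(t) w(s-t) - wc(t) sum_{j<n} c_{j+1} w^(j+1)(s-t), and D_c(wc) = 0 and
   D_c(w) = 0 turn this into -c_0 wc(t) w(s-t) + c_0 wc(t) w(s-t) = 0. Hence F is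
   constant: F u is the right-hand side, and the initial values of wc give
   G_j(0) = [j = 0], so F 0 = w s. *)
From Stdlib Require Import Reals Lia.
From Coquelicot Require Import Coquelicot.
Open Scope C_scope.

Lemma csum_ext N f g : (forall i, (i < N)%nat -> f i = g i) -> csum N f = csum N g.
Proof.
  induction N as [|N IH]; intros H; simpl; [reflexivity|].
  rewrite IH by (intros; apply H; lia). rewrite H by lia. reflexivity.
Qed.

Lemma csum_eq0 N (f : nat -> C) : (forall i, (i < N)%nat -> f i = 0) -> csum N f = 0.
Proof.
  intros H. rewrite (csum_ext N f (fun _ => 0) H). clear H.
  induction N as [|N IH]; simpl; [reflexivity|]. rewrite IH. ring.
Qed.

Lemma csum_plus N f g : csum N (fun i => f i + g i) = csum N f + csum N g.
Proof. induction N as [|N IH]; simpl; [ring|]. rewrite IH. ring. Qed.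

Lemma csum_mult_l N a f : csum N (fun i => a * f i) = a * csum N f.
Proof. induction N as [|N IH]; simpl; [ring|]. rewrite IH. ring. Qed.

Lemma csum_mult_r N a f : csum N f * a = csum N (fun i => f i * a).
Proof. induction N as [|N IH]; simpl; [ring|]. rewrite <- IH. ring. Qed.

Lemma csum_Sl N f : csum (S N) f = f 0%nat + csum N (fun i => f (S i)).
Proof. induction N as [|N IH]; simpl in *; [ring|]. rewrite IH. ring. Qed.

Lemma csum_telescope N a : csum N (fun j => a j - a (S j)) = a 0%nat - a N.
Proof. induction N as [|N IH]; simpl; [ring|]. rewrite IH. ring. Qed.

Definition is_Cderive (f : R -> C) (x : R) (l : C) :=
  is_derive (fun t => fst (f t)) x (fst l) /\ is_derive (fun t => snd (f t)) x (snd l).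

Lemma is_Cderive_eq f x l l' : is_Cderive f x l -> l = l' -> is_Cderive f x l'.
Proof. intros H ->; exact H. Qed.

Lemma is_Cderive_CDerive_n k f x :
  ex_derive (CDerive_n k f) x -> is_Cderive (CDerive_n k f) x (CDerive_n (S k) f x).
Proof.
  intros [l H].
  assert (Hfst : is_derive (fun t => fst (CDerive_n k f t)) x (fst l)).
  { eapply filterdiff_ext_lin.
    - apply (filterdiff_comp' _ fst x _ fst H), filterdiff_linear, is_linear_fst.
    - reflexivity. }
  assert (Hsnd : is_derive (fun t => snd (CDerive_n k f t)) x (snd l)).
  { eapply filterdiff_ext_lin.
    - apply (filterdiff_comp' _ snd x _ snd H), filterdiff_linear, is_linear_snd.
    - reflexivity. }
  change (CDerive_n (S k) f x) with (CDerive (CDerive_n k f) x).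
  unfold is_Cderive, CDerive; simpl.
  replace (Derive (fun t => fst (CDerive_n k f t)) x) with (fst l)
    by (symmetry; apply (is_derive_unique _ _ _ Hfst)).
  replace (Derive (fun t => snd (CDerive_n k f t)) x) with (snd l)
    by (symmetry; apply (is_derive_unique _ _ _ Hsnd)).
  split; assumption.
Qed.

Lemma is_Cderive_const a x : is_Cderive (fun _ => a) x 0.
Proof. split; exact (is_derive_const (V := R_NormedModule) _ x). Qed.

Lemma is_derive_eq (f : R -> R) x l l' : is_derive f x l -> l = l' -> is_derive f x l'.
Proof. intros H ->; exact H. Qed.

Lemma is_Cderive_plus f g x a b :
  is_Cderive f x a -> is_Cderive g x b -> is_Cderive (fun t => f t + g t) x (a + b).
Proof.
  intros [Hf1 Hf2] [Hg1 Hg2]; split.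
  - exact (is_derive_plus _ _ _ _ _ Hf1 Hg1).
  - exact (is_derive_plus _ _ _ _ _ Hf2 Hg2).
Qed.

Lemma is_Cderive_mult f g x a b :
  is_Cderive f x a -> is_Cderive g x b ->
  is_Cderive (fun t => f t * g t) x (a * g x + f x * b).
Proof.
  intros [Hf1 Hf2] [Hg1 Hg2].
  assert (Hcomm : forall r1 r2 : R, mult r1 r2 = mult r2 r1) by (intros; apply Rmult_comm).
  split; eapply is_derive_eq.
  - exact (is_derive_minus _ _ _ _ _
             (is_derive_mult _ _ _ _ _ Hf1 Hg1 Hcomm) (is_derive_mult _ _ _ _ _ Hf2 Hg2 Hcomm)).
  - unfold minus, plus, opp, mult; simpl; ring.
  - exact (is_derive_plus _ _ _ _ _
             (is_derive_mult _ _ _ _ _ Hf1 Hg2 Hcomm) (is_derive_mult _ _ _ _ _ Hf2 Hg1 Hcomm)).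
  - unfold plus, mult; simpl; ring.
Qed.

Lemma is_Cderive_scal a f x l : is_Cderive f x l -> is_Cderive (fun t => a * f t) x (a * l).
Proof.
  intros H. eapply is_Cderive_eq; [apply (is_Cderive_mult _ _ _ _ _ (is_Cderive_const a x) H)|].
  ring.
Qed.

Lemma is_Cderive_reflect f s x l :
  is_Cderive f (s - x)%R l -> is_Cderive (fun t => f (s - t)%R) x (- l).
Proof.
  assert (Hlin : is_derive (fun t => (s - t)%R) x (opp one)).
  { eapply is_derive_eq.
    - apply (is_derive_minus (fun _ => s) (fun t => t)); [apply is_derive_const|apply is_derive_id].
    - apply plus_zero_l. }
  assert (Hreflect : forall (g : R -> R) (m : R), is_derive g (s - x)%R m ->
            is_derive (fun t => g (s - t)%R) x (- m)%R).
  { intros g m Hg. eapply is_derive_eq; [apply (is_derive_comp g (fun t => (s - t)%R) x m _ Hg Hlin)|].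
    exact (scal_opp_one (V := R_NormedModule) m). }
  intros [H1 H2]; split.
  - exact (Hreflect (fun t => fst (f t)) _ H1).
  - exact (Hreflect (fun t => snd (f t)) _ H2).
Qed.

Lemma is_Cderive_csum N (f : nat -> R -> C) (l : nat -> C) x :
  (forall i, (i < N)%nat -> is_Cderive (f i) x (l i)) ->
  is_Cderive (fun t => csum N (fun i => f i t)) x (csum N l).
Proof.
  induction N as [|N IH]; intros H; simpl.
  - apply is_Cderive_const.
  - apply is_Cderive_plus; [apply IH; intros; apply H|apply H]; lia.
Qed.

Lemma is_Cderive_eq0_const F a b : (forall x, is_Cderive F x 0) -> F a = F b.
Proof.
  intros H.
  assert (Hreal : forall g : R -> R, (forall x, is_derive g x 0%R) -> g a = g b).
  { intros g Hg.
    destruct (Rtotal_order a b) as [Hab|[->|Hab]]; [| reflexivity |symmetry];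
      apply (eq_is_derive g); auto. }
  apply injective_projections.
  - exact (Hreal (fun t => fst (F t)) (fun x => proj1 (H x))).
  - exact (Hreal (fun t => snd (F t)) (fun x => proj2 (H x))).
Qed.

Lemma CDerive_n_Sr k f : CDerive_n (S k) f = CDerive_n k (CDerive f).
Proof. induction k as [|k IH]; [reflexivity|]. simpl in *. rewrite IH. reflexivity. Qed.

Lemma Dc_eq0_tail n c f x :
  Dc n c f x = 0 -> csum n (fun k => c (S k) * CDerive_n (S k) f x) = - (c 0%nat * f x).
Proof.
  unfold Dc. rewrite csum_Sl. simpl CDerive_n at 1. intros H.
  set (T := csum n _) in *.
  replace T with (c 0%nat * f x + T - c 0%nat * f x) by ring. rewrite H. ring.
Qed.

Lemma telescope_linear_recursion n (c : nat -> C) (G H W : nat -> C) (a : C) :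
  (forall j, (j < n)%nat -> G j = c (S j) * a + H (S j)) -> H n = 0 ->
  csum n (fun j => H j * W j + G j * - W (S j)) =
  H 0%nat * W 0%nat - a * csum n (fun j => c (S j) * W (S j)).
Proof.
  intros HG Hn.
  rewrite (csum_ext n _ (fun j => (H j * W j - H (S j) * W (S j)) + - a * (c (S j) * W (S j)))).
  - rewrite csum_plus, csum_telescope, csum_mult_l, Hn. ring.
  - intros j Hj. rewrite HG by exact Hj. ring.
Qed.

Section AdditionFormula.

Variables (n : nat) (c : nat -> C).

(* With [f = wc], this is the coefficient of [w^(j)(v)] in the addition formula. *)
Definition tail_comb (f : R -> C) (j : nat) (t : R) : C :=
  csum (n - j) (fun i => c (i + j + 1)%nat * CDerive_n i f t).

Lemma tail_comb_n f t : tail_comb f n t = 0.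
Proof. unfold tail_comb. rewrite Nat.sub_diag. reflexivity. Qed.

Lemma tail_comb_recursion f j t :
  (j < n)%nat -> tail_comb f j t = c (S j) * f t + tail_comb (CDerive f) (S j) t.
Proof.
  intros Hj. unfold tail_comb.
  replace (n - j)%nat with (S (n - S j)) by lia. rewrite csum_Sl.
  replace (0 + j + 1)%nat with (S j) by lia. f_equal.
  apply csum_ext. intros i _.
  rewrite CDerive_n_Sr. do 2 f_equal. lia.
Qed.

Lemma tail_comb_CDerive_0 f t :
  Dc n c f t = 0 -> tail_comb (CDerive f) 0 t = - (c 0%nat * f t).
Proof.
  intros HD. rewrite <- (Dc_eq0_tail n c f t HD). unfold tail_comb. rewrite Nat.sub_0_r.
  apply csum_ext. intros i _. rewrite <- CDerive_n_Sr. do 2 f_equal. lia.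
Qed.

Lemma is_Cderive_tail_comb f j t :
  (forall i x, (i < n)%nat -> ex_derive (CDerive_n i f) x) ->
  is_Cderive (tail_comb f j) t (tail_comb (CDerive f) j t).
Proof.
  intros Hf. unfold tail_comb.
  apply is_Cderive_csum. intros i Hi. rewrite <- CDerive_n_Sr.
  apply is_Cderive_scal, is_Cderive_CDerive_n, Hf. lia.
Qed.

(* Among the initial values only [wc^(n-1)(0) = 1] is nonzero, and the index [n - 1]
   occurs in the sum only for [j = 0]. *)
Lemma tail_comb_char_solution_0 wc j :
  c n = 1 -> is_char_solution n c wc -> (j < n)%nat ->
  tail_comb wc j 0%R = if Nat.eqb j 0 then 1 else 0.
Proof.
  intros hc [_ [_ Hinit]] Hj. unfold tail_comb.
  replace (n - j)%nat with (S (n - S j)) by lia. simpl csum at 1.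
  rewrite csum_eq0.
  - rewrite Hinit by lia.
    destruct (Nat.eqb_spec j 0) as [->|Hj0].
    + rewrite Nat.eqb_refl. replace (n - 1 + 0 + 1)%nat with n by lia. rewrite hc. ring.
    + replace (Nat.eqb (n - S j) (n - 1)) with false by (symmetry; apply Nat.eqb_neq; lia). ring.
  - intros i Hi. rewrite Hinit by lia.
    replace (Nat.eqb i (n - 1)) with false by (symmetry; apply Nat.eqb_neq; lia). ring.
Qed.

Definition conserved_sum (f w : R -> C) (s t : R) : C :=
  csum n (fun j => tail_comb f j t * CDerive_n j w (s - t)%R).

Lemma is_Cderive_conserved_sum f w s t :
  Cn n f -> Cn n w -> (forall x, Dc n c f x = 0) -> (forall x, Dc n c w x = 0) ->
  is_Cderive (conserved_sum f w s) t 0.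
Proof.
  intros [Hf _] [Hw _] HDf HDw. unfold conserved_sum.
  eapply is_Cderive_eq.
  - apply is_Cderive_csum. intros j Hj.
    apply is_Cderive_mult.
    + apply is_Cderive_tail_comb, Hf.
    + apply is_Cderive_reflect, is_Cderive_CDerive_n, Hw, Hj.
  - cbv beta.
    rewrite (telescope_linear_recursion n c (fun j => tail_comb f j t)
               (fun j => tail_comb (CDerive f) j t) (fun j => CDerive_n j w (s - t)%R) (f t)).
    + rewrite (Dc_eq0_tail n c w _ (HDw _)), tail_comb_CDerive_0 by apply HDf. simpl. ring.
    + intros j Hj. apply tail_comb_recursion, Hj.
    + apply tail_comb_n.
Qed.

Lemma conserved_sum_char_solution_0 wc w s :
  (0 < n)%nat -> c n = 1 -> is_char_solution n c wc ->
  conserved_sum wc w s 0%R = w s.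
Proof.
  intros Hn hc Hwc. unfold conserved_sum. rewrite Rminus_0_r.
  replace n with (S (n - 1)) at 1 by lia. rewrite csum_Sl, csum_eq0.
  - rewrite tail_comb_char_solution_0 by (assumption || lia). simpl. ring.
  - intros j Hj. rewrite tail_comb_char_solution_0 by (assumption || lia). simpl. ring.
Qed.

End AdditionFormula.

Theorem mainTheorem1 (n : nat) (c : nat -> C) (hc : c n = 1)
  (wc : R -> C) (Hwc : is_char_solution n c wc)
  (w : R -> C) (Hw : Cn n w) (HD : forall x, Dc n c w x = 0)
  (u v : R) :
  w (u + v)%R =
  csum n (fun j =>
    csum (n - j) (fun i =>
      c (i + j + 1)%nat * CDerive_n i wc u * CDerive_n j w v)).
Proof.
  destruct (Nat.eq_0_gt_0_cases n) as [->|Hn].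
  - specialize (HD (u + v)%R). unfold Dc in HD. simpl in HD |- *.
    rewrite hc in HD. rewrite <- HD. ring.
  - pose proof Hwc as [Hwc_Cn [Hwc_D _]].
    rewrite <- (conserved_sum_char_solution_0 n c wc w (u + v) Hn hc Hwc).
    rewrite (is_Cderive_eq0_const (conserved_sum n c wc w (u + v)) 0 u)
      by (intros; apply is_Cderive_conserved_sum; assumption).
    unfold conserved_sum. replace (u + v - u)%R with v by ring.
    apply csum_ext. intros j _. apply csum_mult_r.
Qed.
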